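(* Let $w\in[0,\infty)^n$ and $c\in(0,\infty)^n$. Let $x,y,z$ be tuples of vertices such that the concatenations $xy$ and $xyz$ are both searches in $\mathcal G$, and suppose $\rho(z)\ge\rho(y)$. Then $$J^+(xy;w,c)\ge\min\{J^+(x;w,c),\,J^+(xyz;w,c)\}.$$
   Context: $\mathcal G=([n],\mathcal E)$ is a finite directed acyclic graph on $[n]$. A search is a tuple $s=(s_1,\dots,s_k)$ of distinct vertices ($0\le k\le n$) such that every in-neighbor of each $s_i$ belongs to $\{s_1,\dots,s_{i-1}\}$. For tuples $a,b$ with disjoint entries, $ab$ denotes their concatenation. For $w\in[0,\infty)^n$, $c\in(0,\infty)^n$ and a tuple $s$ of distinct vertices: $J(s;w,c)=\big(\sum_{i=1}^{|s|}c_{s_i}(1-\sum_{j<i}w_{s_j})\big)/\big(\sum_{i=1}^{|s|}w_{s_i}\big)$ if the denominator is positive and $+\infty$ otherwise (in particular for the empty tuple); $J^+=\max\{0,J\}$ with $\max\{0,+\infty\}=+\infty$. The density of a tuple (or set) is $\rho(A)=\sum_{i\in A}w_i/\sum_{i\in A}c_i$ for nonempty $A$ (taken over its underlying set) and $\rho(\emptyset)=0$. *)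

From HB Require Import structures.
From mathcomp Require Import all_boot all_order all_algebra.
Set Implicit Arguments. Unset Strict Implicit. Unset Printing Implicit Defensive.
Import Order.TTheory GRing.Theory Num.Theory.
Local Open Scope ring_scope.

(* The directed graph on [n] (vertices 'I_n) with edge relation E : E u v
   means u -> v, i.e. u is an in-neighbour of v. *)
Definition acyclic n (E : rel 'I_n) : Prop :=
  forall u v, E u v -> ~~ connect E v u.

Definition is_search n (E : rel 'I_n) (s : seq 'I_n) : Prop :=
  uniq s /\
  forall (a : seq 'I_n) (v : 'I_n) (b : seq 'I_n), s = a ++ v :: b ->
    forall u, E u v -> u \in a.

(* Extended values in [0,+oo]-style : None stands for +oo. *)
Definition ext_le (R : realFieldType) (a b : option R) : bool :=
  match a, b with
  | _, None => true
  | None, Some _ => false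
  | Some a, Some b => a <= b
  end.

Definition ext_min (R : realFieldType) (a b : option R) : option R :=
  match a, b with
  | None, b => b
  | a, None => a
  | Some a, Some b => Some (Order.min a b)
  end.

Fixpoint Jnum_from (R : realFieldType) n (w c : 'I_n -> R) (acc : R)
    (s : seq 'I_n) : R :=
  match s with
  | [::] => 0
  | v :: t => c v * (1 - acc) + Jnum_from w c (acc + w v) t
  end.

(* numerator of J: sum_{i} c_{s_i} (1 - sum_{j<i} w_{s_j}) *)
Definition Jnum (R : realFieldType) n (w c : 'I_n -> R) (s : seq 'I_n) : R :=
  Jnum_from w c 0 s.

Definition J (R : realFieldType) n (w c : 'I_n -> R) (s : seq 'I_n) : option R :=
  let D := \sum_(v <- s) w v in
  if 0 < D then Some (Jnum w c s / D) else None.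

Definition Jplus (R : realFieldType) n (w c : 'I_n -> R) (s : seq 'I_n) : option R :=
  match J w c s with
  | Some r => Some (Order.max 0 r)
  | None => None
  end.

Definition rho (R : realFieldType) n (w c : 'I_n -> R) (s : seq 'I_n) : R :=
  if s is [::] then 0
  else (\sum_(v <- undup s) w v) / (\sum_(v <- undup s) c v).

From HB Require Import structures.
From mathcomp Require Import all_boot all_order all_algebra.
From mathcomp Require Import ring lra.
Import Order.TTheory GRing.Theory Num.Theory.
Local Open Scope ring_scope.
Set Implicit Arguments. Unset Strict Implicit.

(* Write W, C, N for the total weight, total cost and numerator of J, so that
   J(s) = N(s) / W(s) and N(ab) = N(a) + N(b) - W(a) C(b), with
   C(s) (1 - W(s)) <= N(s) <= C(s).  Suppose J+(xyz) > j := J+(xy).  Since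
   J(xyz) is a mediant of J(xy) and the contribution of z, that contribution
   beats j: j W(z) < C(z) (1 - W(xy)).  As y is no denser than z, the same
   strict bound holds for y, and y contributes at least C(y) (1 - W(xy)) to
   N(xy); removing y therefore leaves N(x) < j W(x), so J+(x) <= j.
   Of the search hypotheses only the distinctness of entries is needed. *)

Lemma ext_le_min (R : realFieldType) (a b : option R) (j : R) :
  ext_le (ext_min a b) (Some j) = ext_le a (Some j) || ext_le b (Some j).
Proof. by case: a b => [a|] [b|] //=; rewrite ?ge_min ?orbF. Qed.

Lemma ext_min_lel (R : realFieldType) (a b : option R) :
  ext_le (ext_min a b) a.
Proof. by case: a b => [a|] [b|] //=; rewrite ?ge_min lexx. Qed.

Section SearchCost.
Variables (R : realFieldType) (n : nat) (w c : 'I_n -> R).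

Definition weight (s : seq 'I_n) := \sum_(v <- s) w v.
Definition cost (s : seq 'I_n) := \sum_(v <- s) c v.

Lemma weight_cat a b : weight (a ++ b) = weight a + weight b.
Proof. exact: big_cat. Qed.

Lemma cost_cat a b : cost (a ++ b) = cost a + cost b.
Proof. exact: big_cat. Qed.

Lemma Jnum_fromE acc s : Jnum_from w c acc s = Jnum w c s - acc * cost s.
Proof.
rewrite /Jnum /cost; elim: s acc => [|v t IH] acc /=; first by rewrite big_nil; ring.
by rewrite big_cons IH (IH (0 + w v)); ring.
Qed.

Lemma Jnum_cons v t : Jnum w c (v :: t) = c v + Jnum w c t - w v * cost t.
Proof. by rewrite {1}/Jnum /= Jnum_fromE; ring. Qed.

Lemma Jnum_cat a b : Jnum w c (a ++ b) = Jnum w c a + Jnum w c b - weight a * cost b.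
Proof.
elim: a => [|v t IH]; first by rewrite /weight big_nil mul0r subr0 {2}/Jnum add0r.
by rewrite cat_cons !Jnum_cons IH cost_cat /weight big_cons -/(weight t); ring.
Qed.

Lemma Jplus_le_Some s j :
  ext_le (Jplus w c s) (Some j) <->
  [/\ 0 < weight s, 0 <= j & Jnum w c s <= j * weight s].
Proof.
rewrite /Jplus /J -/(weight s); case: ifP => [W_gt0|W_le0] /=; last first.
  by split=> // -[W_gt0]; rewrite W_gt0 in W_le0.
by rewrite ge_max ler_pdivrMr // (mulrC j); split=> [/andP[]|[_ -> ->]].
Qed.

Hypotheses (w_ge0 : forall i, 0 <= w i) (c_gt0 : forall i, 0 < c i).

Lemma weight_ge0 s : 0 <= weight s.
Proof. exact: sumr_ge0. Qed.

Lemma cost_ge0 s : 0 <= cost s.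
Proof. by apply: sumr_ge0 => i _; apply: ltW. Qed.

Lemma cost_gt0 s : s != [::] -> 0 < cost s.
Proof. by case: s => [//|v t] _; rewrite /cost big_cons ltr_wpDr ?cost_ge0. Qed.

Lemma Jnum_le_cost s : Jnum w c s <= cost s.
Proof.
elim: s => [|v t IH]; first by rewrite /Jnum /cost big_nil.
have := mulr_ge0 (w_ge0 v) (cost_ge0 t).
by rewrite Jnum_cons /cost big_cons -/(cost t); lra.
Qed.

Lemma Jnum_ge_cost s : cost s * (1 - weight s) <= Jnum w c s.
Proof.
elim: s => [|v t IH]; first by rewrite /Jnum /cost big_nil mul0r.
have := mulr_ge0 (ltW (c_gt0 v)) (addr_ge0 (w_ge0 v) (weight_ge0 t)).
by rewrite Jnum_cons /cost /weight !big_cons -/(cost t) -/(weight t); nra.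
Qed.

Lemma rho_le_cross y z : uniq y -> uniq z -> rho w c y <= rho w c z ->
  weight y * cost z <= weight z * cost y.
Proof.
case: y => [|a y] uy; first by rewrite /weight /cost !big_nil mul0r mulr0.
case: z => [|b z] uz; first by rewrite /weight /cost !big_nil mul0r mulr0.
rewrite /rho (undup_id uy) (undup_id uz) -/(weight (a :: y)) -/(cost (a :: y)).
rewrite -/(weight (b :: z)) -/(cost (b :: z)).
by rewrite ler_pdivrMr ?cost_gt0 // mulrAC ler_pdivlMr ?cost_gt0.
Qed.

Lemma slack_of_extension a z j :
  j * weight (a ++ z) < Jnum w c (a ++ z) -> Jnum w c a <= j * weight a ->
  j * weight z < cost z * (1 - weight a).
Proof. by rewrite Jnum_cat weight_cat => ? ?; have := Jnum_le_cost z; lra. Qed.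

Lemma slack_transfer y z j K : y != [::] -> 0 <= j ->
  weight y * cost z <= weight z * cost y ->
  j * weight z < cost z * K -> j * weight y < cost y * K.
Proof.
move=> /cost_gt0 Cy_gt0 j_ge0 cross z_lt.
have Cz_gt0 : 0 < cost z.
  rewrite lt_def cost_ge0 andbT; apply: contraTneq z_lt => ->.
  by rewrite mul0r -leNgt mulr_ge0 ?weight_ge0.
have := ler_wpM2l j_ge0 cross.
have : cost y * (j * weight z) < cost y * (cost z * K) by rewrite ltr_pM2l.
by rewrite -(ltr_pM2l Cz_gt0); lra.
Qed.

Lemma prefix_Jplus_le x y j : 0 <= j ->
  Jnum w c (x ++ y) <= j * weight (x ++ y) ->
  j * weight y < cost y * (1 - weight (x ++ y)) ->
  ext_le (Jplus w c x) (Some j).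
Proof.
rewrite Jnum_cat weight_cat => j_ge0 xy_le y_lt.
have y_ge := Jnum_ge_cost y.
have x_lt : Jnum w c x < j * weight x by nra.
apply/Jplus_le_Some; split=> //; last exact: ltW.
rewrite lt_def weight_ge0 andbT; apply/eqP => Wx0.
by have := Jnum_ge_cost x; have := cost_ge0 x; rewrite Wx0 in x_lt *; lra.
Qed.

End SearchCost.

Theorem proposition2 (R : realFieldType) (n : nat) (E : rel 'I_n)
  (hE : acyclic E) (w c : 'I_n -> R)
  (hw : forall i, 0 <= w i) (hc : forall i, 0 < c i)
  (x y z : seq 'I_n)
  (hxy : is_search E (x ++ y)) (hxyz : is_search E (x ++ y ++ z))
  (hrho : rho w c y <= rho w c z) :
  ext_le (ext_min (Jplus w c x) (Jplus w c (x ++ y ++ z))) (Jplus w c (x ++ y)).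
Proof.
have uy : uniq y by case: hxy; rewrite cat_uniq => /and3P[].
have uz : uniq z by case: hxyz; rewrite catA cat_uniq => /and3P[].
have [-> | y_ne] := eqVneq y [::]; first by rewrite cats0 ext_min_lel.
case jE : (Jplus w c (x ++ y)) => [j|]; last by case: ext_min.
have [W_gt0 j_ge0 xy_le] : [/\ 0 < weight w (x ++ y), 0 <= j &
    Jnum w c (x ++ y) <= j * weight w (x ++ y)].
  by apply/Jplus_le_Some; rewrite jE /= lexx.
rewrite ext_le_min.
case: (boolP (ext_le (Jplus w c (x ++ y ++ z)) (Some j))) => [_ | xyz_gt].
  by rewrite orbT.
have ext_gt : j * weight w ((x ++ y) ++ z) < Jnum w c ((x ++ y) ++ z).
  rewrite ltNge; apply: contra xyz_gt => xyz_le; apply/Jplus_le_Some.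
  split=> //; last by rewrite catA.
  by rewrite catA weight_cat (lt_le_trans W_gt0) // lerDl weight_ge0.
have z_lt := slack_of_extension hw hc ext_gt xy_le.
have y_lt := slack_transfer hw hc y_ne j_ge0 (rho_le_cross hc uy uz hrho) z_lt.
by rewrite (prefix_Jplus_le hw hc j_ge0 xy_le y_lt).
Qed.
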